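(* Suppose $G_1$ and $G_2$ are Polish groups, each of which is isomorphic (as a topological group) to a closed subgroup of the other. If $G_1$ has an $F_\sigma$ subgroup $H_1$ which is universal for $K_\sigma$ subgroups of $G_1$ (i.e., for every $K_\sigma$ subgroup $K\subseteq G_1$ there is a continuous homomorphism $\varphi:G_1\to G_1$ with $\varphi^{-1}(H_1)=K$), then $G_2$ has an $F_\sigma$ subgroup with the analogous property for $K_\sigma$ subgroups of $G_2$.
   Context: A $K_\sigma$ set is a countable union of compact sets; an $F_\sigma$ set is a countable union of closed sets. *)

From HB Require Import structures.
From mathcomp Require Import all_boot all_order all_algebra.
From mathcomp Require Import all_classical all_reals all_analysis.
From mathcomp Require Import Rstruct Rstruct_topology borel_hierarchy.
Set Implicit Arguments. Unset Strict Implicit. Unset Printing Implicit Defensive.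
Import Order.TTheory GRing.Theory Num.Theory.
Local Open Scope classical_set_scope.
Local Open Scope ring_scope.

Record topGroup (T : topologicalType) := TopGroup {
  gmul : T -> T -> T;
  ginv : T -> T;
  gone : T;
  gmulA : forall x y z, gmul x (gmul y z) = gmul (gmul x y) z;
  gmul1g : forall x, gmul gone x = x;
  gmulg1 : forall x, gmul x gone = x;
  gmulVg : forall x, gmul (ginv x) x = gone;
  gmulgV : forall x, gmul x (ginv x) = gone;
  gmul_cont : continuous (fun p : T * T => gmul p.1 p.2);
  ginv_cont : continuous ginv }.

Definition is_metric (T : Type) (d : T -> T -> Rdefinitions.R) :=
  [/\ forall x y, 0 <= d x y,
      forall x y, d x y = 0 <-> x = y,
      forall x y, d x y = d y x &
      forall x y z, d x z <= d x y + d y z].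

Definition metric_compatible (T : topologicalType) (d : T -> T -> Rdefinitions.R) :=
  forall U : set T, open U <->
    (forall x, U x -> exists2 e : Rdefinitions.R, 0 < e & forall y, d x y < e -> U y).

Definition metric_complete (T : topologicalType) (d : T -> T -> Rdefinitions.R) :=
  forall u : nat -> T,
    (forall e : Rdefinitions.R, 0 < e ->
       exists N : nat, forall m n : nat, (N <= m)%N -> (N <= n)%N -> d (u m) (u n) < e) ->
    exists l : T, u @ \oo --> l.

Definition completely_metrizable (T : topologicalType) :=
  exists d : T -> T -> Rdefinitions.R,
    [/\ is_metric d, metric_compatible d & metric_complete d].

Definition separable_space (T : topologicalType) :=
  exists2 D : set T, countable D & dense D.

Definition polish (T : topologicalType) :=
  separable_space T /\ completely_metrizable T.

Definition is_subgroup (T : topologicalType) (G : topGroup T) (H : set T) :=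
  [/\ H (gone G),
      forall x y, H x -> H y -> H (gmul G x y) &
      forall x, H x -> H (ginv G x)].

Definition is_hom (T1 T2 : topologicalType) (G1 : topGroup T1) (G2 : topGroup T2)
  (f : T1 -> T2) := forall x y, f (gmul G1 x y) = gmul G2 (f x) (f y).

Definition Ksigma (T : topologicalType) (S : set T) :=
  exists2 F : (set T)^nat, (forall i, compact (F i)) & S = \bigcup_i (F i).

(* f is an isomorphism of topological groups from G1 onto a closed
   subgroup of G2: an injective continuous homomorphism which is a
   homeomorphism onto its image (open sets map to relatively open sets),
   with closed image. *)
Definition iso_onto_closed_subgroup (T1 T2 : topologicalType)
  (G1 : topGroup T1) (G2 : topGroup T2) (f : T1 -> T2) :=
  [/\ is_hom G1 G2 f, injective f, continuous f,
      (forall U : set T1, open U ->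
         exists2 V : set T2, open V & f @` U = range f `&` V) &
      closed (range f)].

Definition embeds_as_closed_subgroup (T1 T2 : topologicalType)
  (G1 : topGroup T1) (G2 : topGroup T2) :=
  exists f : T1 -> T2, iso_onto_closed_subgroup G1 G2 f.

Definition universal_Ksigma (T : topologicalType) (G : topGroup T) (H : set T) :=
  [/\ is_subgroup G H, Fsigma H &
      forall K : set T, is_subgroup G K -> Ksigma K ->
        exists phi : T -> T, [/\ is_hom G G phi, continuous phi & phi @^-1` H = K]].

From HB Require Import structures.
From mathcomp Require Import all_boot all_order all_algebra.
From mathcomp Require Import all_classical all_reals all_analysis.
From mathcomp Require Import borel_hierarchy.
Set Implicit Arguments.
Local Open Scope classical_set_scope.

(* If f : G1 -> G2 and g : G2 -> G1 are the closed embeddings and H1 is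
   universal for G1, then f(H1) is universal for G2: it is an F_sigma
   subgroup since f maps closed sets to closed sets, and for a K_sigma
   subgroup K of G2 the image g(K) is a K_sigma subgroup of G1, so some
   phi satisfies phi^-1(H1) = g(K); by injectivity of f and g the map
   f \o phi \o g then pulls f(H1) back to exactly K. *)

Section Homomorphism.
Variables (T1 T2 : topologicalType) (G1 : topGroup T1) (G2 : topGroup T2).
Variable f : T1 -> T2.
Hypothesis fhom : is_hom G1 G2 f.

Lemma hom1 : f (gone G1) = gone G2.
Proof.
have := congr1 (gmul G2 (ginv G2 (f (gone G1)))) (fhom (gone G1) (gone G1)).
by rewrite gmul1g gmulA gmulVg gmul1g => <-.
Qed.

Lemma homV x : f (ginv G1 x) = ginv G2 (f x).
Proof.
have := congr1 (gmul G2 ^~ (ginv G2 (f x))) (fhom (ginv G1 x) x).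
by rewrite gmulVg hom1 gmul1g -gmulA gmulgV gmulg1 => <-.
Qed.

Lemma is_subgroup_image H : is_subgroup G1 H -> is_subgroup G2 (f @` H).
Proof.
case=> H1 HM HV; split.
- by exists (gone G1) => //; rewrite hom1.
- by move=> _ _ [x Hx <-] [y Hy <-]; exists (gmul G1 x y); [exact: HM|exact: fhom].
- by move=> _ [x Hx <-]; exists (ginv G1 x); [exact: HV|exact: homV].
Qed.

End Homomorphism.

Lemma Ksigma_image (T1 T2 : topologicalType) (f : T1 -> T2) K :
  continuous f -> Ksigma K -> Ksigma (f @` K).
Proof.
move=> fcont [C Ccp ->]; exists (fun i => f @` C i); last exact: image_bigcup.
by move=> i; apply: continuous_compact (Ccp i); exact: continuous_subspaceT.
Qed.

Section ClosedEmbedding.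
Variables (T1 T2 : topologicalType) (G1 : topGroup T1) (G2 : topGroup T2).
Variable f : T1 -> T2.
Hypothesis fiso : iso_onto_closed_subgroup G1 G2 f.

(* f(C) = range f \ V, where V is open with f(~C) = range f & V. *)
Lemma iso_closed_image C : closed C -> closed (f @` C).
Proof.
case: fiso => _ finj _ fopen frange Ccl.
have [V Vo fCV] := fopen (~` C) (closed_openC Ccl).
suff -> : f @` C = range f `&` ~` V by apply: closedI => //; exact: open_closedC.
apply/seteqP; split.
- move=> _ [x Cx <-]; split; first by exists x.
  move=> Vfx; have : (f @` ~` C) (f x) by rewrite fCV; split => //; exists x.
  by case=> y nCy /finj yx; apply: nCy; rewrite yx.
- move=> _ [[x _ <-] nVfx]; exists x => //; apply/not_notP => nCx.
  have : (f @` ~` C) (f x) by exists x.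
  by rewrite fCV => -[].
Qed.

Lemma iso_Fsigma_image H : Fsigma H -> Fsigma (f @` H).
Proof.
move=> [F Fcl ->]; exists (fun i => f @` F i); last exact: image_bigcup.
by move=> i; exact: iso_closed_image.
Qed.

End ClosedEmbedding.

Lemma preimage_comp_injective (T1 T2 : Type) (f : T1 -> T2) (g : T2 -> T1)
    (phi : T1 -> T1) (H : set T1) (K : set T2) :
  injective f -> injective g -> phi @^-1` H = g @` K ->
  (f \o phi \o g) @^-1` (f @` H) = K.
Proof.
move=> finj ginj phiH; apply/seteqP; split => x /=.
- case=> y Hy /finj yphi; have : (phi @^-1` H) (g x) by rewrite /= -yphi.
  by rewrite phiH => -[z Kz /ginj <-].
- move=> Kx; exists (phi (g x)) => //.
  by have : (phi @^-1` H) (g x) by rewrite phiH; exists x.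
Qed.

Lemma universal_Ksigma_transfer (T1 T2 : topologicalType)
    (G1 : topGroup T1) (G2 : topGroup T2) (f : T1 -> T2) (g : T2 -> T1) H1 :
  iso_onto_closed_subgroup G1 G2 f ->
  is_hom G2 G1 g -> injective g -> continuous g ->
  universal_Ksigma G1 H1 -> universal_Ksigma G2 (f @` H1).
Proof.
move=> fiso ghom ginj gcont [H1sub H1Fs H1univ].
have [fhom finj fcont _ _] := fiso.
split; [exact: (is_subgroup_image fhom H1sub)|exact: (iso_Fsigma_image fiso H1Fs)|].
move=> K Ksub KKs.
have [phi [phihom phicont phiH1]] :=
  H1univ _ (is_subgroup_image ghom Ksub) (Ksigma_image gcont KKs).
exists (f \o phi \o g); split.
- by move=> x y /=; rewrite ghom phihom fhom.
- move=> x; apply: continuous_comp; first exact: gcont.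
  by apply: continuous_comp; [exact: phicont|exact: fcont].
- exact: preimage_comp_injective.
Qed.

Theorem mainTheorem6 (T1 T2 : topologicalType) (G1 : topGroup T1) (G2 : topGroup T2) :
  polish T1 -> polish T2 ->
  embeds_as_closed_subgroup G1 G2 -> embeds_as_closed_subgroup G2 G1 ->
  (exists H1 : set T1, universal_Ksigma G1 H1) ->
  exists H2 : set T2, universal_Ksigma G2 H2.
Proof.
move=> _ _ [f fiso] [g [ghom ginj gcont _ _]] [H1 H1univ].
by exists (f @` H1); exact: universal_Ksigma_transfer fiso ghom ginj gcont H1univ.
Qed.
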